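(* Let $p\in(1,2)$ and let $u$ be an ancient solution of the half-space problem $u_t-\Delta u=|\nabla u|^p$ in $\mathbb{R}^n_+\times(-\infty,0)$, $u=0$ on $\partial\mathbb{R}^n_+\times(-\infty,0)$. Assume that for each $\varepsilon>0$, $$\inf_{\Gamma_R\times(-\infty,-\varepsilon]}u=o(R)\quad\text{as }R\to\infty.$$ Then $u\ge0$.
   Context: $\mathbb{R}^n_+:=\{x\in\mathbb{R}^n: x_n>0\}$, $\Gamma_R:=\{x\in\mathbb{R}^n: 0<x_n<R\}$. An ancient solution of the half-space problem is a function $u\in C^{2,1}(Q)\cap C(\overline Q)$, $Q=\mathbb{R}^n_+\times(-\infty,0)$, satisfying the PDE pointwise in $Q$ and $u=0$ pointwise on $\partial\mathbb{R}^n_+\times(-\infty,0)$. *)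

From mathcomp Require Import all_boot.
From Stdlib Require Import Reals.
From Coquelicot Require Import Coquelicot.
Open Scope R_scope.

(* the last coordinate x_n (0 in the degenerate case n = 0) *)
Definition lastc {n : nat} (x : 'I_n -> R) : R :=
  match n as m return ('I_m -> R) -> R with
  | 0 => fun _ => 0
  | m.+1 => fun y => y ord_max
  end x.

Definition shift {n : nat} (x : 'I_n -> R) (i : 'I_n) (s : R) : 'I_n -> R :=
  fun j => if j == i then x j + s else x j.

Definition pd {n : nat} (i : 'I_n) (f : ('I_n -> R) -> R -> R)
  : ('I_n -> R) -> R -> R :=
  fun x t => Derive (fun s => f (shift x i s) t) 0.
Definition has_pd {n : nat} (i : 'I_n) (f : ('I_n -> R) -> R -> R)
  (x : 'I_n -> R) (t : R) : Prop :=
  ex_derive (fun s => f (shift x i s) t) 0.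
Definition dt {n : nat} (f : ('I_n -> R) -> R -> R) : ('I_n -> R) -> R -> R :=
  fun x t => Derive (fun s => f x s) t.

Definition gradnorm {n : nat} (f : ('I_n -> R) -> R -> R) (x : 'I_n -> R) (t : R) : R :=
  sqrt (\big[Rplus/0]_(i < n) (pd i f x t) ^ 2).
Definition lap {n : nat} (f : ('I_n -> R) -> R -> R) (x : 'I_n -> R) (t : R) : R :=
  \big[Rplus/0]_(i < n) pd i (pd i f) x t.

Definition rpow (a p : R) : R := if Rlt_dec 0 a then Rpower a p else 0.

Definition inQ {n : nat} (x : 'I_n -> R) (t : R) : Prop := 0 < lastc x /\ t < 0.
Definition inQbar {n : nat} (x : 'I_n -> R) (t : R) : Prop := 0 <= lastc x /\ t <= 0.

Definition cont_within {n : nat} (D : ('I_n -> R) -> R -> Prop)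
  (f : ('I_n -> R) -> R -> R) (x : 'I_n -> R) (t : R) : Prop :=
  forall eps, 0 < eps -> exists delta, 0 < delta /\
    forall y s, D y s -> (forall i, Rabs (y i - x i) < delta) ->
      Rabs (s - t) < delta -> Rabs (f y s - f x t) < eps.

Definition C21 {n : nat} (f : ('I_n -> R) -> R -> R) : Prop :=
  forall x t, inQ x t ->
    cont_within inQ f x t /\
    (forall i, has_pd i f x t /\ cont_within inQ (pd i f) x t) /\
    (forall i j, has_pd j (pd i f) x t /\ cont_within inQ (pd j (pd i f)) x t) /\
    ex_derive (fun s => f x s) t /\ cont_within inQ (dt f) x t.

Definition ancient_solution {n : nat} (p : R) (u : ('I_n -> R) -> R -> R) : Prop :=
  C21 u /\
  (forall x t, inQbar x t -> cont_within inQbar u x t) /\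
  (forall x t, inQ x t -> dt u x t - lap u x t = rpow (gradnorm u x t) p) /\
  (forall x t, lastc x = 0 -> t < 0 -> u x t = 0).

From mathcomp Require Import all_boot.
From Stdlib Require Import Reals Lra FunctionalExtensionality.
From Coquelicot Require Import Coquelicot.
From mathcomp Require all_algebra all_classical all_reals all_analysis Rstruct_topology.
From mathcomp Require Import Rstruct.
Open Scope R_scope.

(* Fix (x0, t0) in Q and kappa > 0; it suffices to show u(x0, t0) >= - kappa x0_n.
   By the growth assumption u >= - kappa rho on 0 < x_n <= rho, t <= t0, for rho large.
   For small B > 0 compare u with the barrier
     phi(x, t) = - kappa x_n - B |x - x0|^2 + B (t - t0)
   on a box {|x_j - x0_j| <= L (j < n), 0 <= x_n <= rho, t0 - L <= t <= t0} with
   L = kappa rho / B + 1, and take a minimum point of u - phi.  If the minimum were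
   negative, it could not lie on x_n = 0 (where u = 0 >= phi) nor on the other faces
   except the top one (there phi <= - kappa rho <= u).  At the remaining points u_t <= B,
   u_ii >= - 2B and |grad u| >= |u_{x_n}| >= kappa / 2, so
   u_t - Delta u <= (2n + 1) B < (kappa / 2)^p <= |grad u|^p, contradicting the equation. *)

Definition in_box {n : nat} (a b : 'I_n -> R) (T1 T2 : R) (x : 'I_n -> R) (t : R) : Prop :=
  (forall i, a i <= x i <= b i) /\ T1 <= t <= T2.

Module BoxExtremum.
Import all_algebra all_classical all_reals all_analysis Rstruct_topology.
Import numFieldNormedType.Exports.
Local Open Scope ring_scope.
Local Open Scope classical_set_scope.

Section Box.
Variables (n : nat) (a b : 'I_n -> R) (T1 T2 : R).

(* Points (x, t) are encoded as row vectors of 'rV_(n + 1), where boxes are compact. *)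
Definition space_part (v : 'rV[R]_(n + 1)) : 'I_n -> R := fun i => v ord0 (lshift 1 i).
Definition time_part (v : 'rV[R]_(n + 1)) : R := v ord0 (rshift n ord0).
Definition to_row (x : 'I_n -> R) (t : R) : 'rV[R]_(n + 1) :=
  \row_j (match fintype.split j with inl i => x i | inr _ => t end).
Definition box_side (j : 'I_(n + 1)) : set R :=
  match fintype.split j with inl i => `[a i, b i] | inr _ => `[T1, T2] end.

Lemma space_part_to_row x t : space_part (to_row x t) = x.
Proof. by apply: funext => i; rewrite /space_part /to_row mxE (unsplitK (inl i)). Qed.

Lemma time_part_to_row x t : time_part (to_row x t) = t.
Proof. by rewrite /time_part /to_row mxE (unsplitK (inr ord0)). Qed.

Lemma in_box_rowE : [set v : 'rV[R]_(n + 1) | in_box a b T1 T2 (space_part v) (time_part v)] =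
  [set v | forall j, box_side j (v ord0 j)].
Proof.
apply/seteqP; split => v /=.
- move=> [Hx [H1 H2]] j; rewrite /box_side.
  have := splitK j; case: (fintype.split j) => [i|k] /= <-.
  + have [h1 h2] := Hx i; rewrite /= in_itv /=; apply/andP; split; exact/RleP.
  + have -> : k = ord0 by apply: ord_inj; case: k => [[]].
    rewrite /= in_itv /=; apply/andP; split; exact/RleP.
- move=> H; split; [move=> i|]; rewrite /space_part /time_part.
  + move: (H (lshift 1 i)); rewrite /box_side (unsplitK (inl i)) /= in_itv /=.
    by move=> /andP [/RleP ? /RleP ?].
  + move: (H (rshift n ord0)); rewrite /box_side (unsplitK (inr ord0)) /= in_itv /=.
    by move=> /andP [/RleP ? /RleP ?].
Qed.

Lemma in_box_attains_min (F : ('I_n -> R) -> R -> R) :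
  (forall i, Rle (a i) (b i)) -> Rle T1 T2 ->
  (forall x t, in_box a b T1 T2 x t -> cont_within (in_box a b T1 T2) F x t) ->
  exists x t, in_box a b T1 T2 x t /\
    forall y s, in_box a b T1 T2 y s -> Rle (F x t) (F y s).
Proof.
move=> hab hT hc.
pose A := [set v : 'rV[R]_(n + 1) | in_box a b T1 T2 (space_part v) (time_part v)].
pose G v := F (space_part v) (time_part v).
have A0 : A !=set0.
  exists (to_row a T1); rewrite /A /= space_part_to_row time_part_to_row.
  by split=> [i|]; split; [exact: Rle_refl | exact: hab | exact: Rle_refl | exact: hT].
have cA : compact A.
  rewrite /A in_box_rowE; apply: rV_compact => j; rewrite /box_side.
  by case: (fintype.split j) => ?; apply: segment_compact.
have cG : {within A, continuous G}.
  apply/subspace_continuousP => v Av; apply/(@cvgrPdist_lt _ R^o) => e /RltP e0.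
  have [d [/RltP d0 Hd]] := hc _ _ Av e e0.
  rewrite near_withinE; near=> w => Aw.
  have Hb : forall j, `|v ord0 j - w ord0 j| < d.
    near: w; apply/nbhs_ballP; exists d => //= w [_ Bw] j.
    by move: (Bw ord0 j); rewrite /pseudometric_structure.ball.
  apply/RltP; rewrite /G.
  have H := Hd (space_part w) (time_part w) Aw.
  refine (Rle_lt_trans _ _ _ (Req_le _ _ (Rabs_minus_sym _ _)) (H _ _)).
  - move=> i; refine (Rle_lt_trans _ _ _ (Req_le _ _ (Rabs_minus_sym _ _)) _).
    by apply/RltP; exact: Hb.
  - refine (Rle_lt_trans _ _ _ (Req_le _ _ (Rabs_minus_sym _ _)) _).
    by apply/RltP; exact: Hb.
have [c Ac minc] := compact_EVT_min A0 cA cG.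
exists (space_part c), (time_part c); split; first by move: Ac; rewrite inE.
move=> y s Hys; apply/RleP.
have := minc (to_row y s); rewrite /G space_part_to_row time_part_to_row; apply.
by rewrite inE /A /= space_part_to_row time_part_to_row.
Unshelve. all: end_near.
Qed.

End Box.
End BoxExtremum.

Lemma derive_ge_of_right_increment (f : R -> R) x l a c d :
  is_derive f x l -> 0 < d ->
  (forall r, 0 < r < d -> r * (a + c * r) <= f (x + r) - f x) -> a <= l.
Proof.
move=> /is_derive_Reals Hd Hdp Hm.
case: (Rle_or_lt a l) => // Hlt; exfalso.
pose eps := (a - l) / 2.
have [d1 Hd1] := Hd eps ltac:(rewrite /eps; lra).
have Hd1p := cond_pos d1.
have Hc := Rabs_pos c.
pose e := Rmin (Rmin d d1) (eps / (Rabs c + 1)).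
have He : 0 < e.
  by apply: Rmin_pos; [apply: Rmin_pos | apply: Rdiv_lt_0_compat]; rewrite /eps; lra.
have He1 : e <= Rmin d d1 := Rmin_l _ _.
have He2 : e <= eps / (Rabs c + 1) := Rmin_r _ _.
have Hd_d1 := Rmin_l d d1; have Hd1_d1 := Rmin_r d d1.
pose r := e / 2.
(* the increment bound gives a difference quotient >= a - |c| r > a - eps *)
have Hrc : r * (Rabs c + 1) < eps.
  have : eps / (Rabs c + 1) * (Rabs c + 1) = eps by field; lra.
  rewrite /r; nra.
have Hq := Hd1 r ltac:(rewrite /r; lra) ltac:(rewrite Rabs_pos_eq /r; lra).
have Hmr := Hm r ltac:(rewrite /r; lra).
pose q := (f (x + r) - f x) / r.
have Hqr : f (x + r) - f x = q * r by rewrite /q; field; rewrite /r; lra.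
have Hcr : - Rabs c * r <= c * r by have := Rle_abs (- c); rewrite Rabs_Ropp /r; nra.
have /Rabs_def2 [Hq1 _] : Rabs (q - l) < eps by exact: Hq.
by rewrite Hqr in Hmr; rewrite /eps /r in Hrc Hq1 Hmr Hcr; nra.
Qed.

Lemma derive_le_of_left_increment (f : R -> R) x l a c d :
  is_derive f x l -> 0 < d ->
  (forall r, 0 < r < d -> r * (a + c * r) <= f (x - r) - f x) -> l <= - a.
Proof.
move=> Hd Hdp Hm.
suff : a <= - l by lra.
apply: (derive_ge_of_right_increment (fun z => f (- z)) (- x) _ a c d _ Hdp).
- have -> : - l = scal (-1) l by rewrite /scal /= /mult /=; ring.
  apply: (is_derive_comp f (fun z => - z)); first by rewrite Ropp_involutive.
  by auto_derive.
- move=> r Hr; have -> : - (- x + r) = x - r by ring.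
  by rewrite Ropp_involutive; apply: Hm.
Qed.

Lemma Derive_at_quadratic_min (U : R -> R) a c d :
  0 < d -> ex_derive U 0 ->
  (forall r, Rabs r < d -> U 0 <= U r - a * r - c * r ^ 2) -> Derive U 0 = a.
Proof.
move=> Hd /Derive_correct D0 Hm.
have Hge : a <= Derive U 0.
  apply: (derive_ge_of_right_increment U 0 _ a c d D0 Hd) => r Hr.
  rewrite Rplus_0_l; have := Hm r ltac:(rewrite Rabs_pos_eq; lra); nra.
have Hle : Derive U 0 <= a.
  have -> : a = - - a by ring.
  apply: (derive_le_of_left_increment U 0 _ (- a) c d D0 Hd) => r Hr.
  rewrite Rminus_0_l; have := Hm (- r) ltac:(rewrite Rabs_Ropp Rabs_pos_eq; lra); nra.
lra.
Qed.

Lemma lt_of_derive_neg_right (h g : R -> R) d r :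
  0 < r < d -> (forall z, 0 <= z < d -> is_derive h z (g z)) ->
  g 0 <= 0 -> (forall z, 0 < z < d -> g z < 0) -> h r < h 0.
Proof.
move=> Hr Hh Hg0 Hg.
have mvt : forall z1 z2, 0 <= z1 < z2 -> z2 < d ->
    exists z, z1 <= z <= z2 /\ h z2 - h z1 = g z * (z2 - z1).
  move=> z1 z2 Hz1 Hz2.
  have := MVT_gen h z1 z2 g; rewrite Rmin_left ?Rmax_right; try lra.
  apply=> z Hz; first by apply: Hh; lra.
  apply: derivable_continuous_pt; exists (g z).
  by apply/is_derive_Reals/Hh; lra.
(* g may vanish at 0, so strictness comes from the second half [r/2, r] *)
have [z1 [Hz1 E1]] := mvt 0 (r / 2) ltac:(lra) ltac:(lra).
have [z2 [Hz2 E2]] := mvt (r / 2) r ltac:(lra) ltac:(lra).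
have G1 : g z1 <= 0 by case: (Req_dec z1 0) => [->|?] //; left; apply: Hg; lra.
have G2 : g z2 < 0 by apply: Hg; lra.
nra.
Qed.

Lemma Derive2_at_quadratic_min (U : R -> R) a c d :
  0 < d -> (forall r, Rabs r < d -> ex_derive U r) -> ex_derive (Derive U) 0 ->
  (forall r, Rabs r < d -> U 0 <= U r - a * r - c * r ^ 2) -> 2 * c <= Derive (Derive U) 0.
Proof.
move=> Hd Hex Hex2 Hm.
have Ha := Derive_at_quadratic_min U a c d Hd (Hex 0 ltac:(rewrite Rabs_R0; lra)) Hm.
case: (Rle_or_lt (2 * c) (Derive (Derive U) 0)) => // Hlt; exfalso.
have /is_derive_Reals D1 := Derive_correct _ _ Hex2.
have [d1 Hd1] := D1 ((2 * c - Derive (Derive U) 0) / 2) ltac:(lra).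
have Hd1p := cond_pos d1.
pose g z := Derive U z - a - 2 * c * z.
pose h z := U z - a * z - c * z ^ 2.
have Hdd := Rmin_l d d1; have Hdd1 := Rmin_r d d1.
have Hmin : 0 < Rmin d d1 by apply: Rmin_pos.
have Hneg : forall z, 0 < z < Rmin d d1 -> g z < 0.
  move=> z Hz.
  have := Hd1 z ltac:(lra) ltac:(rewrite Rabs_pos_eq; lra).
  rewrite Rplus_0_l Ha => /Rabs_def2 [Hq1 Hq2].
  have Hqz : (Derive U z - a) / z * z = Derive U z - a by field; lra.
  rewrite /g; nra.
have Hh : forall z, 0 <= z < Rmin d d1 -> is_derive h z (g z).
  move=> z Hz; rewrite /h /g; auto_derive.
  - by apply: Hex; rewrite Rabs_pos_eq; lra.
  - by change (Derive [eta U] z) with (Derive U z); ring.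
have := lt_of_derive_neg_right h g (Rmin d d1) (Rmin d d1 / 2) ltac:(lra) Hh
  ltac:(rewrite /g Ha; lra) Hneg.
have := Hm (Rmin d d1 / 2) ltac:(rewrite Rabs_pos_eq; lra).
rewrite /h; simpl; lra.
Qed.

Lemma shiftD {n} (y : 'I_n -> R) i r q : shift (shift y i r) i q = shift y i (r + q).
Proof. by apply: functional_extensionality => j; rewrite /shift; case: (j == i); ring. Qed.

Lemma shift0 {n} (y : 'I_n -> R) i : shift y i 0 = y.
Proof. by apply: functional_extensionality => j; rewrite /shift; case: (j == i); ring. Qed.

Lemma is_derive_of_translate (f : R -> R) r :
  ex_derive (fun q => f (r + q)) 0 -> is_derive f r (Derive (fun q => f (r + q)) 0).
Proof.
move=> /Derive_correct H.
have H2 : is_derive (fun z => f (r + (z - r))) r (scal 1 (Derive (fun q => f (r + q)) 0)).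
  apply: (is_derive_comp (fun q => f (r + q)) (fun z => z - r)); last by auto_derive.
  by rewrite Rminus_diag.
rewrite scal_one in H2; apply: is_derive_ext H2 => z; congr f; ring.
Qed.

Lemma is_derive_along_coord {n} (f : ('I_n -> R) -> R -> R) y s i r :
  has_pd i f (shift y i r) s ->
  is_derive (fun q => f (shift y i q) s) r (pd i f (shift y i r) s).
Proof.
have E : (fun q => f (shift (shift y i r) i q) s) = (fun q => f (shift y i (r + q)) s).
  by apply: functional_extensionality => q; rewrite shiftD.
by rewrite /has_pd /pd E; apply: (is_derive_of_translate (fun q => f (shift y i q) s)).
Qed.

Lemma pd_at_quadratic_min {n} (f : ('I_n -> R) -> R -> R) y s i a c d :
  C21 f -> 0 < d -> (forall r, Rabs r < d -> inQ (shift y i r) s) ->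
  (forall r, Rabs r < d -> f y s <= f (shift y i r) s - a * r - c * r ^ 2) ->
  pd i f y s = a /\ 2 * c <= pd i (pd i f) y s.
Proof.
move=> Hf Hd HQ Hm.
pose U r := f (shift y i r) s.
have HU : forall r, Rabs r < d -> is_derive U r (pd i f (shift y i r) s).
  by move=> r /HQ /Hf [_ [/(_ i) [Hpd _] _]]; apply: is_derive_along_coord.
have Hloc : locally 0 (fun r => pd i f (shift y i r) s = Derive U r).
  exists (mkposreal _ Hd) => r Hr; apply/esym/is_derive_unique/HU.
  by move: Hr; rewrite /ball /= /AbsRing_ball /abs /minus /plus /opp /= Ropp_0 Rplus_0_r.
have HyQ : inQ y s by rewrite -(shift0 y i); apply: HQ; rewrite Rabs_R0.
have [_ [_ [/(_ i i) [Hpd2 _] _]]] := Hf y s HyQ.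
have Hex2 := ex_derive_ext_loc _ _ _ Hloc Hpd2.
have HmU : forall r, Rabs r < d -> U 0 <= U r - a * r - c * r ^ 2.
  by move=> r Hr; rewrite /U shift0; apply: Hm.
have HexU : forall r, Rabs r < d -> ex_derive U r by move=> r /HU Hr; eexists; exact: Hr.
split.
- exact: (Derive_at_quadratic_min U a c d Hd (HexU 0 ltac:(rewrite Rabs_R0; lra)) HmU).
- rewrite /pd (Derive_ext_loc _ _ _ Hloc).
  exact: (Derive2_at_quadratic_min U a c d Hd HexU Hex2 HmU).
Qed.

Section ContWithin.
Variables (n : nat) (D : ('I_n -> R) -> R -> Prop).

Lemma cont_within_ext (f g : ('I_n -> R) -> R -> R) x t :
  (forall y s, f y s = g y s) -> cont_within D f x t -> cont_within D g x t.
Proof.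
move=> E H eps /H [d [Hd Hd2]]; exists d; split=> // y s Hy H1 H2.
by rewrite -!E; apply: Hd2.
Qed.

Lemma cont_within_const c x t : cont_within D (fun _ _ => c) x t.
Proof. by move=> eps Heps; exists 1; split=> [|*]; rewrite ?Rminus_diag ?Rabs_R0; lra. Qed.

Lemma cont_within_coord i x t : cont_within D (fun y _ => y i) x t.
Proof. by move=> eps Heps; exists eps; split=> // y s _ /(_ i). Qed.

Lemma cont_within_time x t : cont_within D (fun _ s => s) x t.
Proof. by move=> eps Heps; exists eps. Qed.

Lemma cont_within_plus f g x t : cont_within D f x t -> cont_within D g x t ->
  cont_within D (fun y s => f y s + g y s) x t.
Proof.
move=> Hf Hg eps Heps.
have [d1 [Hd1 H1]] := Hf (eps / 2) ltac:(lra).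
have [d2 [Hd2 H2]] := Hg (eps / 2) ltac:(lra).
exists (Rmin d1 d2); split=> [|y s Hy Hyx Hs]; first exact: Rmin_pos.
have m1 := Rmin_l d1 d2; have m2 := Rmin_r d1 d2.
have A1 := H1 y s Hy (fun i => Rlt_le_trans _ _ _ (Hyx i) m1) ltac:(lra).
have A2 := H2 y s Hy (fun i => Rlt_le_trans _ _ _ (Hyx i) m2) ltac:(lra).
have -> : f y s + g y s - (f x t + g x t) = (f y s - f x t) + (g y s - g x t) by ring.
by apply: Rle_lt_trans (Rabs_triang _ _) _; lra.
Qed.

Lemma cont_within_comp (g : R -> R) f x t : cont_within D f x t -> continuity_pt g (f x t) ->
  cont_within D (fun y s => g (f y s)) x t.
Proof.
move=> Hf Hg eps Heps; have [a [Ha Ha2]] := Hg eps Heps.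
have [d [Hd H1]] := Hf a Ha.
exists d; split=> // y s Hy Hyx Hs.
case: (Req_dec (f y s) (f x t)) => [->|Ne]; first by rewrite Rminus_diag Rabs_R0; lra.
by apply: Ha2; split; [split=> //; exact: not_eq_sym | exact: H1].
Qed.

Lemma cont_within_scal c f x t : cont_within D f x t -> cont_within D (fun y s => c * f y s) x t.
Proof. by move=> Hf; apply: (cont_within_comp (fun z => c * z)) => //; reg. Qed.

Lemma cont_within_sum k (G : 'I_k -> ('I_n -> R) -> R -> R) x t :
  (forall j, cont_within D (G j) x t) ->
  cont_within D (fun y s => \big[Rplus/0]_(j < k) G j y s) x t.
Proof.
elim: k G => [|k IH] G HG.
- apply: (cont_within_ext (fun _ _ => 0)); last exact: cont_within_const.
  by move=> y s; rewrite big_ord0.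
- apply: (cont_within_ext
    (fun y s => \big[Rplus/0]_(j < k) G (widen_ord (leqnSn k) j) y s + G ord_max y s)).
  + by move=> y s; rewrite big_ord_recr.
  + by apply: cont_within_plus; [apply: IH => j|]; apply: HG.
Qed.

Lemma cont_within_subset (E : ('I_n -> R) -> R -> Prop) f x t :
  (forall y s, D y s -> E y s) -> cont_within E f x t -> cont_within D f x t.
Proof. by move=> HDE Hf eps /Hf [d [Hd H1]]; exists d; split=> // y s /HDE; apply: H1. Qed.

End ContWithin.

Lemma big_Rplus_le k (F G : 'I_k -> R) : (forall i, F i <= G i) ->
  \big[Rplus/0]_(i < k) F i <= \big[Rplus/0]_(i < k) G i.
Proof. by move=> H; apply: (big_ind2 (fun a b => a <= b)) => *; [lra | lra | apply: H]. Qed.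

Lemma big_Rplus_ge0 k (P : pred 'I_k) (F : 'I_k -> R) : (forall i, 0 <= F i) ->
  0 <= \big[Rplus/0]_(i < k | P i) F i.
Proof. by move=> H; apply: (big_ind (fun a => 0 <= a)) => *; [lra | lra | apply: H]. Qed.

Lemma big_Rplus_const k c : \big[Rplus/0]_(i < k) c = INR k * c.
Proof.
elim: k => [|k IH]; first by rewrite big_ord0 /=; ring.
by rewrite big_ord_recr IH S_INR /=; ring.
Qed.

Lemma big_Rplus_ge_term k (F : 'I_k -> R) i : (forall j, 0 <= F j) ->
  F i <= \big[Rplus/0]_(j < k) F j.
Proof.
move=> H; rewrite (bigD1 i) //=.
by rewrite -{1}(Rplus_0_r (F i)); apply/Rplus_le_compat_l/big_Rplus_ge0.
Qed.

Lemma gradnorm_ge_pd {n} (f : ('I_n -> R) -> R -> R) x t i :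
  Rabs (pd i f x t) <= gradnorm f x t.
Proof.
rewrite /gradnorm -sqrt_Rsqr_abs Rsqr_pow2; apply: sqrt_le_1_alt.
by apply: (big_Rplus_ge_term _ (fun j => pd j f x t ^ 2)) => j; apply: pow2_ge_0.
Qed.

Lemma lap_ge {n} (f : ('I_n -> R) -> R -> R) x t c :
  (forall i, c <= pd i (pd i f) x t) -> INR n * c <= lap f x t.
Proof. by move=> H; rewrite -big_Rplus_const; apply: big_Rplus_le. Qed.

Lemma Rpower_le_rpow a b p : 0 <= p -> 0 < a <= b -> Rpower a p <= rpow b p.
Proof.
move=> Hp Hab; rewrite /rpow; case: Rlt_dec => [?|?]; last lra.
by apply: Rle_Rpower_l.
Qed.

Lemma glb_lower_bound (E : R -> Prop) m c y :
  is_glb_Rbar E (Finite m) -> Rabs m <= c -> E y -> - c <= y.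
Proof.
move=> [Hlb _] Hm Ey; have /= := Hlb (Finite y) Ey.
by have := Rle_abs (- m); rewrite Rabs_Ropp; lra.
Qed.

Lemma in_box_shift {n} (a b : 'I_n -> R) T1 T2 y s i :
  in_box a b T1 T2 y s -> a i < y i < b i ->
  exists d, 0 < d /\ forall r, Rabs r < d ->
    in_box a b T1 T2 (shift y i r) s /\ a i < y i + r < b i.
Proof.
move=> [Hy Hs] Hi; exists (Rmin (y i - a i) (b i - y i)); split.
  by apply: Rmin_pos; lra.
move=> r /Rabs_def2 Hr; have := Rmin_l (y i - a i) (b i - y i).
have := Rmin_r (y i - a i) (b i - y i) => *.
split; last lra.
split=> // j; rewrite /shift; case: eqP => [->|_]; [lra | exact: Hy].
Qed.

Section Barrier.
Variables (m : nat) (kappa B t0 : R) (x0 : 'I_m.+1 -> R).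

Definition barrier (x : 'I_m.+1 -> R) (t : R) : R :=
  - kappa * x ord_max - B * \big[Rplus/0]_(j < m.+1) (x j - x0 j) ^ 2 + B * (t - t0).

Definition barrier_slope (x : 'I_m.+1 -> R) (i : 'I_m.+1) : R :=
  - kappa * (if i == ord_max then 1 else 0) - 2 * B * (x i - x0 i).

Lemma barrier_shift x t i r :
  barrier (shift x i r) t = barrier x t + barrier_slope x i * r - B * r ^ 2.
Proof.
have Esum : \big[Rplus/0]_(j < m.+1) (shift x i r j - x0 j) ^ 2 =
    \big[Rplus/0]_(j < m.+1) (x j - x0 j) ^ 2 + (2 * (x i - x0 i) * r + r ^ 2).
  rewrite (bigD1 i) //= [in RHS](bigD1 i) //= (eq_bigr (fun j => (x j - x0 j) ^ 2)).
    by rewrite /shift eqxx /=; ring.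
  by move=> j /negbTE Hj; rewrite /shift Hj.
have Elast : shift x i r ord_max = x ord_max + r * (if i == ord_max then 1 else 0).
  by rewrite /shift eq_sym; case: (i == ord_max); ring.
by rewrite /barrier /barrier_slope Esum Elast; ring.
Qed.

Lemma barrier_time_shift x t r : barrier x (t - r) = barrier x t - B * r.
Proof. by rewrite /barrier; ring. Qed.

Lemma barrier_center : barrier x0 t0 = - kappa * x0 ord_max.
Proof. by rewrite /barrier big1 => [|j _]; ring. Qed.

Lemma barrier_nonpos x t :
  0 <= kappa -> 0 <= B -> 0 <= x ord_max -> t <= t0 -> barrier x t <= 0.
Proof.
move=> Hk HB Hx Ht; rewrite /barrier.
have := big_Rplus_ge0 _ xpredT (fun j => (x j - x0 j) ^ 2) (fun j => pow2_ge_0 _).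
by nra.
Qed.

Lemma cont_within_barrier D x t : cont_within D barrier x t.
Proof.
apply: cont_within_plus; [apply: cont_within_plus|].
- exact/cont_within_scal/cont_within_coord.
- apply: (cont_within_ext _ _ (fun y s => - B * \big[Rplus/0]_(j < m.+1) (y j - x0 j) ^ 2)).
    by move=> *; ring.
  apply/cont_within_scal/cont_within_sum => j.
  apply: (cont_within_comp _ _ (fun z => (z - x0 j) ^ 2)); first exact: cont_within_coord.
  by reg.
- apply/cont_within_scal/(cont_within_ext _ _ (fun _ s => s + - t0)); first by move=> *; ring.
  exact/cont_within_plus/cont_within_const/cont_within_time.
Qed.

End Barrier.

Section Comparison.
Variables (m : nat) (p : R) (u : ('I_m.+1 -> R) -> R -> R).
Variables (kappa rho B t0 : R) (x0 : 'I_m.+1 -> R).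
Hypotheses (hp : 0 <= p) (hu : ancient_solution p u).
Hypotheses (hkappa : 0 < kappa) (hB : 0 < B) (hx0 : inQ x0 t0) (hrho : x0 ord_max <= rho).
Hypotheses (hB_rho : B * (4 * rho) <= kappa)
  (hB_p : B * (2 * INR m.+1 + 1) < Rpower (kappa / 2) p).
Hypothesis hlow : forall y s, 0 < y ord_max <= rho -> s <= t0 -> - kappa * rho <= u y s.

Let L := kappa * rho / B + 1.
Let T1 := t0 - L.
Let lo j := if j == ord_max then 0 else x0 j - L.
Let hi j := if j == ord_max then rho else x0 j + L.
Let box := in_box lo hi T1 t0.
Let phi := barrier m kappa B t0 x0.
Let F y s := u y s - phi y s.

Let rho_gt0 : 0 < rho.
Proof. by have := proj1 hx0; rewrite /lastc; lra. Qed.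

Let BL : B * L = kappa * rho + B.
Proof. by rewrite /L; field; lra. Qed.

Let L_ge1 : 1 <= L.
Proof.
have : 0 <= kappa * rho / B by apply: Rle_mult_inv_pos; nra.
by rewrite /L; lra.
Qed.

Lemma box_center : box x0 t0.
Proof.
have := proj1 hx0; have := proj2 hx0; rewrite /lastc => ? ?.
split=> [j|]; last by rewrite /T1; lra.
by rewrite /lo /hi; case: eqP => [->|_]; lra.
Qed.

Lemma box_inQbar y s : box y s -> inQbar y s.
Proof.
move=> [/(_ ord_max) Hy Hs]; rewrite /lo eqxx in Hy.
by have := proj2 hx0; split; [exact: (proj1 Hy) | lra].
Qed.

Lemma barrier_gt_inside y s : box y s -> - kappa * rho < phi y s ->
  [/\ y ord_max < rho, T1 < s & forall j, j != ord_max -> Rabs (y j - x0 j) < L].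
Proof.
move=> [Hy Hs] Hphi; move: Hphi; rewrite /phi /barrier.
have Hyn : 0 <= y ord_max by have := Hy ord_max; rewrite /lo eqxx; lra.
set S := \big[Rplus/0]_(j < m.+1) _.
have HS : 0 <= S by apply: big_Rplus_ge0 => j; apply: pow2_ge_0.
move=> Hphi; split.
- by case: (Rlt_or_le (y ord_max) rho) => // ?; nra.
- by case: (Rlt_or_le T1 s) => // ?; rewrite /T1 in Hs *; nra.
- move=> j Hj; case: (Rlt_or_le (Rabs (y j - x0 j)) L) => // HL.
  have HSj : L * L <= S.
    apply: Rle_trans (big_Rplus_ge_term _ (fun j => (y j - x0 j) ^ 2) j _) => [|?].
      by rewrite -(pow2_abs (y j - x0 j)); nra.
    exact: pow2_ge_0.
  have : B * L <= B * S by apply: Rmult_le_compat_l; nra.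
  by nra.
Qed.

Lemma no_interior_min y s :
  box y s -> 0 < y ord_max < rho -> T1 < s ->
  (forall j, j != ord_max -> Rabs (y j - x0 j) < L) ->
  ~ (forall z r, box z r -> F y s <= F z r).
Proof.
move=> Hbox Hyn Hs Hlat Hmin.
have [HC [_ [Hpde _]]] := hu.
have HyQ : inQ y s by split; [exact: (proj1 Hyn) | have := proj2 hx0; case: Hbox; lra].
have Hcoord i : pd i u y s = barrier_slope m kappa B x0 y i /\ - 2 * B <= pd i (pd i u) y s.
  have Hi : lo i < y i < hi i.
    rewrite /lo /hi; case: eqP => [->|/eqP Hi]; first lra.
    by have := Hlat i Hi => /Rabs_def2; lra.
  have [d [Hd Hsh]] := in_box_shift lo hi T1 t0 y s i Hbox Hi.
  have HQ r : Rabs r < d -> inQ (shift y i r) s.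
    move=> /Hsh [_ Hr]; split; last exact: (proj2 HyQ).
    rewrite /lastc /shift; case: eqP => [Hmi|_]; last exact: (proj1 HyQ).
    by move: Hr; rewrite -Hmi /lo eqxx; lra.
  have [|-> ?] := pd_at_quadratic_min u y s i (barrier_slope m kappa B x0 y i) (- B) d HC Hd HQ.
    by move=> r /Hsh [/Hmin]; rewrite /F /phi barrier_shift => ? _; lra.
  by split=> //; lra.
have Hdt : dt u y s <= B.
  have [_ [_ [_ [Hex _]]]] := HC y s HyQ.
  have -> : B = - - B by ring.
  apply: (derive_le_of_left_increment _ s _ (- B) 0 (s - T1) (Derive_correct _ _ Hex)).
    lra.
  move=> r Hr; have : box y (s - r) by case: Hbox => Hy Hs'; split=> //; lra.
  by move=> /Hmin; rewrite /F /phi barrier_time_shift; lra.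
have Hlap : INR m.+1 * (- 2 * B) <= lap u y s by apply: lap_ge => i; apply: (Hcoord i).2.
have Hgrad : kappa / 2 <= gradnorm u y s.
  apply: Rle_trans (gradnorm_ge_pd u y s ord_max).
  rewrite (Hcoord ord_max).1 /barrier_slope eqxx.
  have := proj1 hx0; rewrite /lastc => ?.
  rewrite Rabs_left1; nra.
have := Rpower_le_rpow (kappa / 2) (gradnorm u y s) p hp ltac:(lra).
have := Hpde y s HyQ; nra.
Qed.

Lemma barrier_comparison : - kappa * x0 ord_max <= u x0 t0.
Proof.
have [_ [Hcont [_ Hbd]]] := hu.
have Hlo_hi j : lo j <= hi j by rewrite /lo /hi; case: eqP; lra.
have [||y [s [Hys Hmin]]] := BoxExtremum.in_box_attains_min _ lo hi T1 t0 F Hlo_hi.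
- by rewrite /T1; lra.
- move=> x t /box_inQbar Hxt.
  apply: (cont_within_ext _ _ (fun y s => u y s + (-1) * phi y s)).
    by move=> *; rewrite /F; ring.
  apply: cont_within_plus; last exact/cont_within_scal/cont_within_barrier.
  exact: (cont_within_subset _ _ _ _ _ _ box_inQbar (Hcont _ _ Hxt)).
suff HF : 0 <= F y s.
  by move: HF (Hmin x0 t0 box_center); rewrite /F /phi barrier_center; lra.
case: (Rle_or_lt 0 (F y s)) => // HFneg; exfalso.
have [Hy0 Hs0] := box_inQbar y s Hys; rewrite /lastc in Hy0.
have Hst0 : s <= t0 by case: Hys => _; lra.
have Ht0 := proj2 hx0.
case: (Rle_lt_or_eq_dec _ _ Hy0) => [Hyn|Hyn].
- have Hyrho : y ord_max <= rho by case: Hys => /(_ ord_max); rewrite /hi eqxx; lra.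
  have Hu := hlow y s (conj Hyn Hyrho) Hst0.
  have [|Hrho Hs Hlat] := barrier_gt_inside y s Hys; first by move: HFneg; rewrite /F; lra.
  exact: (no_interior_min y s Hys (conj Hyn Hrho) Hs Hlat Hmin).
- have Hu0 : u y s = 0 by apply: Hbd; [rewrite /lastc -Hyn | lra].
  have := barrier_nonpos m kappa B t0 x0 y s ltac:(lra) ltac:(lra) Hy0 Hst0.
  by move: HFneg; rewrite /F /phi; lra.
Qed.

End Comparison.

Definition strip_inf_sublinear {n : nat} (u : ('I_n -> R) -> R -> R) : Prop :=
  forall eps, 0 < eps -> forall eta, 0 < eta ->
    exists R0, forall Rr, R0 <= Rr ->
      exists m : R,
        is_glb_Rbar (fun y => exists (x : 'I_n -> R) (t : R),
                        0 < lastc x < Rr /\ t <= - eps /\ y = u x t) (Finite m)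
        /\ Rabs m <= eta * Rr.

Lemma ancient_solution_ge_linear m p (u : ('I_m.+1 -> R) -> R -> R) x0 t0 kappa :
  0 <= p -> ancient_solution p u -> strip_inf_sublinear u ->
  inQ x0 t0 -> 0 < kappa -> - kappa * x0 ord_max <= u x0 t0.
Proof.
move=> hp hu hinf hx0 hkappa.
have [hxn ht0] := hx0; rewrite /lastc in hxn.
have [R0 HR0] := hinf (- t0) ltac:(lra) (kappa / 2) ltac:(lra).
pose rho := Rmax (Rabs R0) (x0 ord_max).
have Hrho1 : Rabs R0 <= rho := Rmax_l _ _.
have Hrho2 : x0 ord_max <= rho := Rmax_r _ _.
have [mm [Hglb Hmm]] := HR0 (2 * rho) ltac:(have := Rle_abs R0; lra).
pose P := Rpower (kappa / 2) p.
have HP : 0 < P by rewrite /P /Rpower; apply: exp_pos.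
pose N := INR m.+1.
have HN : 0 <= N := pos_INR _.
pose B := Rmin (kappa / (4 * rho)) (P / (2 * (2 * N + 1))).
apply: (barrier_comparison m p u kappa rho B t0 x0 hp hu hkappa _ hx0 Hrho2).
- by apply: Rmin_pos; apply: Rdiv_lt_0_compat; lra.
- have : B <= kappa / (4 * rho) := Rmin_l _ _.
  have : kappa / (4 * rho) * (4 * rho) = kappa by field; lra.
  by nra.
- have : B <= P / (2 * (2 * N + 1)) := Rmin_r _ _.
  have : P / (2 * (2 * N + 1)) * (2 * (2 * N + 1)) = P by field; lra.
  by rewrite -/N -/P; nra.
- move=> y s Hy Hs.
  have Hm := glb_lower_bound _ mm (kappa / 2 * (2 * rho)) (u y s) Hglb Hmm.
  suff : - (kappa / 2 * (2 * rho)) <= u y s by lra.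
  by apply: Hm; exists y, s; rewrite /lastc; repeat split; lra.
Qed.

Theorem proposition5p5 (n : nat) (hn : (1 <= n)%nat) (p : R) (hp : 1 < p < 2)
  (u : ('I_n -> R) -> R -> R) (hu : ancient_solution p u)
  (hinf : forall eps, 0 < eps -> forall eta, 0 < eta ->
     exists R0, forall Rr, R0 <= Rr ->
       exists m : R,
         is_glb_Rbar (fun y => exists (x : 'I_n -> R) (t : R),
                         0 < lastc x < Rr /\ t <= - eps /\ y = u x t) (Finite m)
         /\ Rabs m <= eta * Rr) :
  forall (x : 'I_n -> R) (t : R), inQ x t -> 0 <= u x t.
Proof.
case: n hn u hu hinf => [//|m] _ u hu hinf x t hx.
case: (Rle_or_lt 0 (u x t)) => // Hneg; exfalso.
have hxn : 0 < x ord_max := proj1 hx.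
have := ancient_solution_ge_linear m p u x t (- u x t / (2 * x ord_max)) ltac:(lra) hu hinf hx.
have -> : - (- u x t / (2 * x ord_max)) * x ord_max = u x t / 2 by field; lra.
by move=> /(_ ltac:(apply: Rdiv_lt_0_compat; lra)); lra.
Qed.
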